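(* Let $n$ be such that $\theta^n=\mathrm{id}$, let $a\in\mathbb F^*$ with $\theta(a)=a$ (so $x^n-a$ is central in $\mathcal R$ and $\mathcal S_a$ is a ring), and suppose $x^n-a=hg$ with $g,h\in\mathcal R$. Then: (1) $M^\theta_a$ induces an injective ring homomorphism $\mathcal S_a\to\mathbb F^{n\times n}$; (2) $x^n-a=gh$; (3) $M^\theta_a(\overline g)M^\theta_a(\overline h)=M^\theta_a(\overline h)M^\theta_a(\overline g)=0$; (4) the maps $\psi_h:\mathcal S_a\to\mathcal S_a$, $\overline f\mapsto\overline{fh}$ and $\psi_g:\mathcal S_a\to\mathcal S_a$, $\overline f\mapsto\overline{fg}$ are left $\mathcal R$-module homomorphisms with $\ker\psi_h=\mathcal R\overline g=\mathrm{ann}_l(\overline h\,\mathcal S_a)$ and $\ker\psi_g=\mathcal R\overline h=\mathrm{ann}_l(\overline g\,\mathcal S_a)$; (5) the maps $\psi'_h:\overline f\mapsto\overline{hf}$ and $\psi'_g:\overline f\mapsto\overline{gf}$ on $\mathcal S_a$ are right $\mathcal R$-module homomorphisms with $\ker\psi'_h=\overline g\,\mathcal S_a=\mathrm{ann}_r(\mathcal S_a\overline h)$ and $\ker\psi'_g=\overline h\,\mathcal S_a=\mathrm{ann}_r(\mathcal S_a\overline g)$; (6) if $\mathcal C=\mathfrak v_a(\mathcal R\overline g)$ and $h=\sum_{i=0}^kh_ix^i$ with $h_k\ne0$, then $\mathcal C^\perp=\mathfrak v_{a^{-1}}(\mathcal R\overline{\rho_l(h)})$, where $\rho_l(h)=h_k+\theta(h_{k-1})x+\dots+\theta^k(h_0)x^k$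 and the coset is taken in $\mathcal R/\mathcal R(x^n-a^{-1})$.
   Context: $\mathbb F$ is a finite field, $\theta\in\mathrm{Aut}(\mathbb F)$, $\mathcal R=\mathbb F[x;\theta]$ the skew polynomial ring (elements $\sum f_ix^i$ with left coefficients, multiplication determined by $xb=\theta(b)x$). For $e\in\mathbb F^*$, $\mathcal S_e=\mathcal R/\mathcal R(x^n-e)$, $\overline f$ the coset of $f$, $\mathcal R\overline f$ the left submodule generated by $\overline f$, $\overline f\,\mathcal S_a$ the right ideal of the ring $\mathcal S_a$ generated by $\overline f$; $\mathrm{ann}_l(X)=\{s\in\mathcal S_a: sX=0\}$ and $\mathrm{ann}_r(X)=\{s\in\mathcal S_a: Xs=0\}$. $\mathfrak v_e:\mathcal S_e\to\mathbb F^n$ is the inverse of $(c_0,\dots,c_{n-1})\mapsto\overline{\sum_{i=0}^{n-1}c_ix^i}$, and $M^\theta_a(\overline f)$ is the $n\times n$ matrix whose row with index $i$ ($0\le i\le n-1$) is $\mathfrak v_a(\overline{x^if})$. $\mathcal C^\perp$ is the dual code with respect to the standard bilinear form on $\mathbb F^n$. *)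

From HB Require Import structures.
From mathcomp Require Import all_boot all_order all_algebra all_field.
From mathcomp Require Import boolp.
Set Implicit Arguments. Unset Strict Implicit. Unset Printing Implicit Defensive.
Import GRing.Theory.
Local Open Scope ring_scope.

Section SkewPoly.
Variable F : finFieldType.
Variable theta : F -> F.

(* Skew polynomials sum_i f_i x^i (left coefficients) are represented by
   their coefficient sequence, i.e. by an element of {poly F}.  The skew
   product is determined by x b = theta(b) x:
     (sum_i f_i x^i) (sum_j g_j x^j) = sum_{i,j} f_i theta^i(g_j) x^(i+j). *)
Definition smul (f g : {poly F}) : {poly F} :=
  \sum_(i < size f) \sum_(j < size g)
     (f`_i * iter i theta g`_j) *: 'X^(i + j).

Definition xn_e (n : nat) (e : F) : {poly F} := 'X^n - e%:P.

(* f and f' have the same coset in S_e = R / R(x^n - e),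
   i.e. f - f' lies in the left ideal R (x^n - e). *)
Definition cong (n : nat) (e : F) (f f' : {poly F}) : Prop :=
  exists q : {poly F}, f - f' = smul q (xn_e n e).

Definition poly_of_vec (n : nat) (c : 'rV[F]_n) : {poly F} :=
  \sum_(i < n) c 0 i *: 'X^i.

(* v_e : S_e -> F^n, inverse of c |-> coset of sum_{i<n} c_i x^i; on a
   representative f it returns the (unique) c with f in the coset of
   sum c_i x^i. *)
Definition vv (n : nat) (e : F) (f : {poly F}) : 'rV[F]_n :=
  odflt 0 [pick c : 'rV[F]_n | `[< cong n e f (poly_of_vec c) >] ].

Definition Mth (n : nat) (e : F) (f : {poly F}) : 'M[F]_n :=
  \matrix_(i < n, j < n) vv n e (smul 'X^i f) 0 j.

Definition rho_l (h : {poly F}) : {poly F} :=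
  \poly_(i < size h) iter i theta h`_((size h).-1 - i).

End SkewPoly.

Definition dotv (F : fieldType) (n : nat) (u c : 'rV[F]_n) : F :=
  \sum_(i < n) u 0 i * c 0 i.

From Pilot Require Import Defs.
From HB Require Import structures.
From mathcomp Require Import all_boot all_order all_algebra all_field.
From mathcomp Require Import boolp zify.
Set Implicit Arguments. Unset Strict Implicit. Unset Printing Implicit Defensive.
Import GRing.Theory.
Local Open Scope ring_scope.

(* Because theta^n = id and theta(a) = a, the polynomial x^n - a is central, so
   congruence modulo the left ideal R(x^n - a) is compatible with products on both
   sides; and since its left multiples are its ordinary multiples, the remainders of
   ordinary division by x^n - a are canonical representatives of S_a.  Together with
   the absence of zero divisors in R this gives (1)-(5).  For (6), y.c is the constant
   term of c * Y(y) in S_a for an explicit Y(y), so y is orthogonal to R g iff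
   g Y(y) = 0 in S_a iff Y(y) lies in h S_a.  The anti-isomorphism S_a -> S_(a^-1)
   substituting a x^(n-1) (the inverse of x in S_(a^-1)) for x maps Y(y) to y and
   h S_a onto R rho_l(h). *)

Lemma big_ord_widen_zero (V : zmodType) m N (G : nat -> V) : (m <= N)%N ->
  (forall i, (m <= i)%N -> G i = 0) -> \sum_(i < N) G i = \sum_(i < m) G i.
Proof.
move=> le_mN G0; rewrite (big_ord_widen N G le_mN) [RHS]big_mkcond /=.
by apply: eq_bigr => i _; case: ltnP => // /G0.
Qed.

Section SkewMultiplication.
Variables (F : finFieldType) (theta : {rmorphism F -> F}).
Implicit Types (f g p : {poly F}) (c d : F).

(* Locked, so that rewriting never unfolds a product into its defining double sum. *)
Fact skmul_key : unit. Proof. by []. Qed.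
Definition skmul : {poly F} -> {poly F} -> {poly F} := locked_with skmul_key (smul theta).
Local Notation "f ** g" := (skmul f g) (at level 40, left associativity).

Lemma smulE : smul theta = skmul.
Proof. by rewrite /skmul unlock. Qed.

Local Notation th i := (iter i theta).

Lemma iter_rmorph0 i : th i 0 = 0.
Proof. by elim: i => //= i ->; rewrite rmorph0. Qed.
Lemma iter_rmorph1 i : th i 1 = 1.
Proof. by elim: i => //= i ->; rewrite rmorph1. Qed.
Lemma iter_rmorphD i c d : th i (c + d) = th i c + th i d.
Proof. by elim: i => //= i ->; rewrite rmorphD. Qed.
Lemma iter_rmorphM i c d : th i (c * d) = th i c * th i d.
Proof. by elim: i => //= i ->; rewrite rmorphM. Qed.
Lemma iter_fmorphV i c : th i c^-1 = (th i c)^-1.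
Proof. by elim: i => //= i ->; rewrite fmorphV. Qed.
Lemma iter_fmorph_eq0 i c : (th i c == 0) = (c == 0).
Proof. by elim: i => //= i <-; rewrite fmorph_eq0. Qed.
Lemma iter_fixed i c : theta c = c -> th i c = c.
Proof. by move=> fix_c; elim: i => //= i ->. Qed.

Lemma monomial_expansion f : f = \sum_(i < size f) f`_i *: 'X^i.
Proof. by rewrite -poly_def coefK. Qed.

Lemma smul_widen N M f g : (size f <= N)%N -> (size g <= M)%N ->
  f ** g = \sum_(i < N) \sum_(j < M) (f`_i * th i g`_j) *: 'X^(i + j).
Proof.
move=> szf szg; rewrite /skmul unlock /smul.
rewrite (big_ord_widen_zero
  (G := fun i => \sum_(j < M) (f`_i * th i g`_j) *: 'X^(i + j)) szf); last first.
  by move=> i le_f_i; rewrite big1 // => j _; rewrite nth_default // mul0r scale0r.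
apply: eq_bigr => i _.
rewrite (big_ord_widen_zero (G := fun j => (f`_i * th i g`_j) *: 'X^(i + j)) szg) //.
by move=> j le_g_j; rewrite (nth_default 0 le_g_j) iter_rmorph0 mulr0 scale0r.
Qed.
Arguments smul_widen N M {f g}.

Lemma smulDl f f' g : (f + f') ** g = f ** g + f' ** g.
Proof.
rewrite !(smul_widen (maxn (size f) (size f')) (size g)) ?leq_maxl ?leq_maxr
  ?size_polyD // -big_split; apply: eq_bigr => i _; rewrite -big_split.
by apply: eq_bigr => j _; rewrite coefD mulrDl scalerDl.
Qed.

Lemma smulDr f g g' : f ** (g + g') = f ** g + f ** g'.
Proof.
rewrite !(smul_widen (size f) (maxn (size g) (size g'))) ?leq_maxl ?leq_maxr
  ?size_polyD // -big_split; apply: eq_bigr => i _; rewrite -big_split.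
by apply: eq_bigr => j _; rewrite coefD iter_rmorphD mulrDr scalerDl.
Qed.

Lemma smul0l g : 0 ** g = 0.
Proof. by rewrite /skmul unlock /smul size_poly0 big_ord0. Qed.
Lemma smul0r f : f ** 0 = 0.
Proof. by rewrite /skmul unlock /smul size_poly0 big1 // => i _; rewrite big_ord0. Qed.

Lemma smulZl c f g : (c *: f) ** g = c *: (f ** g).
Proof.
rewrite !(smul_widen (size f) (size g)) ?size_scale_leq // scaler_sumr.
apply: eq_bigr => i _; rewrite scaler_sumr; apply: eq_bigr => j _.
by rewrite coefZ scalerA mulrA.
Qed.

Lemma smulNl f g : (- f) ** g = - (f ** g).
Proof. by rewrite -scaleN1r smulZl scaleN1r. Qed.
Lemma smulNr f g : f ** (- g) = - (f ** g).
Proof. by apply: (addIr (f ** g)); rewrite -smulDr !addNr smul0r. Qed.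
Lemma smulBl f f' g : (f - f') ** g = f ** g - f' ** g.
Proof. by rewrite smulDl smulNl. Qed.
Lemma smulBr f g g' : f ** (g - g') = f ** g - f ** g'.
Proof. by rewrite smulDr smulNr. Qed.

Lemma smul_suml (I : Type) (r : seq I) (P : pred I) (G : I -> {poly F}) g :
  (\sum_(i <- r | P i) G i) ** g = \sum_(i <- r | P i) G i ** g.
Proof. by elim/big_rec2: _ => [|i x y _ <-]; rewrite ?smul0l ?smulDl. Qed.
Lemma smul_sumr (I : Type) (r : seq I) (P : pred I) (G : I -> {poly F}) f :
  f ** (\sum_(i <- r | P i) G i) = \sum_(i <- r | P i) f ** G i.
Proof. by elim/big_rec2: _ => [|i x y _ <-]; rewrite ?smul0r ?smulDr. Qed.

Lemma smul_monomial c i d j :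
  (c *: 'X^i) ** (d *: 'X^j) = (c * th i d) *: 'X^(i + j).
Proof.
rewrite (smul_widen i.+1 j.+1) ?(leq_trans (size_scale_leq _ _)) ?size_polyXn //.
rewrite big_ord_recr /= big1 ?add0r => [|k _]; last first.
  by rewrite big1 // => l _; rewrite coefZ coefXn ltn_eqF // mulr0 mul0r scale0r.
rewrite big_ord_recr /= big1 ?add0r => [|l _]; last first.
  by rewrite !coefZ !coefXn (ltn_eqF (ltn_ord l)) mulr0 iter_rmorph0 mulr0 scale0r.
by rewrite !coefZ !coefXn !eqxx !mulr1.
Qed.

Lemma smulA f g p : f ** g ** p = f ** (g ** p).
Proof.
rewrite (monomial_expansion f) !smul_suml; apply: eq_bigr => i _.
rewrite (monomial_expansion g) !smul_sumr !smul_suml !smul_sumr.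
apply: eq_bigr => j _; rewrite (monomial_expansion p) !smul_sumr.
by apply: eq_bigr => l _; rewrite !smul_monomial iterD iter_rmorphM mulrA addnA.
Qed.

Lemma polyC_monomial c : c%:P = c *: 'X^0 :> {poly F}.
Proof. by rewrite expr0 -mul_polyC mulr1. Qed.

Lemma smulCl c f : c%:P ** f = c *: f.
Proof.
rewrite [in RHS](monomial_expansion f) [in LHS](monomial_expansion f) smul_sumr.
rewrite scaler_sumr; apply: eq_bigr => i _.
by rewrite polyC_monomial smul_monomial add0n scalerA.
Qed.

Lemma smulCr f c : theta c = c -> f ** c%:P = c *: f.
Proof.
move=> fix_c; rewrite [in RHS](monomial_expansion f) [in LHS](monomial_expansion f).
rewrite smul_suml scaler_sumr; apply: eq_bigr => i _.
by rewrite polyC_monomial smul_monomial iter_fixed // addn0 scalerA mulrC.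
Qed.

Lemma smul1l f : 1 ** f = f.
Proof. by rewrite smulCl scale1r. Qed.
Lemma smul1r f : f ** 1 = f.
Proof. by rewrite smulCr ?rmorph1 ?scale1r. Qed.

Lemma smul_Xnr f k : f ** 'X^k = f * 'X^k.
Proof.
rewrite [in LHS](monomial_expansion f) [in RHS](monomial_expansion f).
rewrite smul_suml mulr_suml; apply: eq_bigr => i _.
by rewrite -[X in _ ** X]scale1r smul_monomial iter_rmorph1 mulr1 -scalerAl -exprD.
Qed.

Lemma smulXn i j : 'X^i ** 'X^j = 'X^(i + j) :> {poly F}.
Proof. by rewrite smul_Xnr exprD. Qed.

Lemma coef_smul_top f g : f != 0 -> g != 0 ->
  (f ** g)`_((size f).-1 + (size g).-1) = lead_coef f * th (size f).-1 (lead_coef g).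
Proof.
rewrite -!size_poly_gt0 /lead_coef => /prednK szf /prednK szg.
set df := (size f).-1; set dg := (size g).-1.
rewrite (smul_widen df.+1 dg.+1); [|by rewrite szf|by rewrite szg].
rewrite coef_sum big_ord_recr /=.
rewrite big1 ?add0r => [|i _]; last first.
  rewrite coef_sum big1 // => j _; rewrite coefZ coefXn gtn_eqF ?mulr0 //.
  by have := ltn_ord i; have := ltn_ord j; lia.
rewrite coef_sum big_ord_recr /= big1 ?add0r => [|j _]; last first.
  by rewrite coefZ coefXn gtn_eqF ?mulr0 // ltn_add2l.
by rewrite coefZ coefXn eqxx mulr1.
Qed.

Lemma smulf_eq0 f g : (f ** g == 0) = (f == 0) || (g == 0).
Proof.
have [->|nz_f] := eqVneq f 0; first by rewrite smul0l eqxx.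
have [->|nz_g] /= := eqVneq g 0; first by rewrite smul0r eqxx.
apply/negP => /eqP fg0; have := coef_smul_top nz_f nz_g; rewrite fg0 coef0.
by move/esym/eqP; rewrite mulf_eq0 iter_fmorph_eq0 !lead_coef_eq0 (negPf nz_f) (negPf nz_g).
Qed.

Lemma smulIf g : g != 0 -> injective (skmul^~ g).
Proof.
move=> nz_g f f' /eqP; rewrite -subr_eq0 -smulBl smulf_eq0 (negPf nz_g) orbF.
by rewrite subr_eq0 => /eqP.
Qed.

Lemma smulfI f : f != 0 -> injective (skmul f).
Proof.
move=> nz_f g g' /eqP; rewrite -subr_eq0 -smulBr smulf_eq0 (negPf nz_f).
by rewrite subr_eq0 => /eqP.
Qed.

End SkewMultiplication.

Section Congruence.
Variables (F : finFieldType) (theta : {rmorphism F -> F}) (n : nat) (e : F).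
Hypotheses (n_gt0 : (0 < n)%N) (fix_e : theta e = e).
Implicit Types (f g r q : {poly F}) (c : 'rV[F]_n).

Local Notation "f ** g" := (skmul theta f g) (at level 40, left associativity).
Local Notation xn := (xn_e n e).
Local Notation vv := (vv theta n e).
Local Notation "f = g %[smod e ]" := (cong theta n e f g)
  (at level 70, g at next level, format "f  =  g  %[smod  e ]").

Lemma congE f f' : f = f' %[smod e] <-> exists q, f - f' = q ** xn.
Proof. by rewrite /cong smulE. Qed.

Lemma cong_refl f : f = f %[smod e].
Proof. by apply/congE; exists 0; rewrite subrr smul0l. Qed.

Lemma cong_sym f f' : f = f' %[smod e] -> f' = f %[smod e].
Proof. by move=> /congE [q eq_f]; apply/congE; exists (- q); rewrite smulNl -eq_f opprB. Qed.

Lemma cong_trans f f' f'' :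
  f = f' %[smod e] -> f' = f'' %[smod e] -> f = f'' %[smod e].
Proof.
move=> /congE [q eq_f] /congE [q' eq_f']; apply/congE; exists (q + q').
by rewrite smulDl -eq_f -eq_f' addrA subrK.
Qed.

Lemma congD f f' g g' :
  f = f' %[smod e] -> g = g' %[smod e] -> f + g = f' + g' %[smod e].
Proof.
move=> /congE [q eq_f] /congE [q' eq_g]; apply/congE; exists (q + q').
by rewrite smulDl -eq_f -eq_g opprD addrACA.
Qed.

Lemma congZ (k : F) f f' : f = f' %[smod e] -> k *: f = k *: f' %[smod e].
Proof. by move=> /congE [q eq_f]; apply/congE; exists (k *: q); rewrite smulZl -eq_f scalerBr. Qed.

Lemma cong_sum (I : Type) (s : seq I) (P : pred I) (G G' : I -> {poly F}) :
  (forall i, P i -> G i = G' i %[smod e]) ->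
  \sum_(i <- s | P i) G i = \sum_(i <- s | P i) G' i %[smod e].
Proof.
move=> eq_G; elim/big_rec2: _ => [|i x y Pi Hxy]; first exact: cong_refl.
exact: congD (eq_G i Pi) Hxy.
Qed.

Lemma cong_xn_e0 : xn = 0 %[smod e].
Proof. by apply/congE; exists 1; rewrite subr0 smul1l. Qed.

Lemma congMl r f f' : f = f' %[smod e] -> r ** f = r ** f' %[smod e].
Proof.
by move=> /congE [q eq_f]; apply/congE; exists (r ** q); rewrite -smulBr eq_f smulA.
Qed.

Lemma size_xn_e : size xn = n.+1.
Proof. exact: size_XnsubC. Qed.

Lemma xn_e_neq0 : xn != 0.
Proof. by rewrite -size_poly_eq0 size_xn_e. Qed.

Lemma smul_xn_e q : q ** xn = q * xn.
Proof.
by rewrite /xn_e smulBr smulCr // smul_Xnr mulrBr [q * e%:P]mulrC mul_polyC.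
Qed.

Lemma congP f f' : f = f' %[smod e] <-> f %% xn = f' %% xn.
Proof.
rewrite congE; apply: (iff_trans (B := xn %| f - f')); last first.
  split=> [/modp_eq0P|eq_mod]; last by apply/modp_eq0P; rewrite modpD modpN eq_mod subrr.
  by rewrite modpD modpN => /eqP; rewrite subr_eq0 => /eqP.
split=> [[q]|/dvdpP [q] ->]; last by exists q; rewrite smul_xn_e.
by rewrite smul_xn_e => ->; rewrite dvdp_mull.
Qed.

Lemma cong_XnD m : 'X^(n + m) = e *: 'X^m %[smod e].
Proof.
have -> : 'X^(n + m) = 'X^m * xn + e *: 'X^m.
  by rewrite /xn_e mulrBr -exprD addnC -mul_polyC [e%:P * _]mulrC subrK.
by apply/congP; rewrite modpD modp_mull add0r.
Qed.

Lemma cong_Xn_mulD (k m : nat) : 'X^(k * n + m) = e ^+ k *: 'X^m %[smod e].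
Proof.
elim: k => [|k IHk]; first by rewrite mul0n add0n expr0 scale1r; exact: cong_refl.
rewrite mulSn -addnA exprS -scalerA; apply: cong_trans (cong_XnD _) (congZ _ IHk).
Qed.

Hypothesis theta_n : forall x : F, iter n theta x = x.

Lemma smul_Xn_comm f : 'X^n ** f = f ** 'X^n.
Proof.
rewrite [in LHS](monomial_expansion f) [in RHS](monomial_expansion f).
rewrite smul_sumr smul_suml; apply: eq_bigr => i _.
by rewrite -(scale1r ('X^n : {poly F})) !smul_monomial theta_n
  iter_rmorph1 mulr1 mul1r addnC.
Qed.

Lemma smul_xn_e_comm f : xn ** f = f ** xn.
Proof. by rewrite /xn_e smulBl smulBr smulCl smulCr // smul_Xn_comm. Qed.

Lemma congMr r f f' : f = f' %[smod e] -> f ** r = f' ** r %[smod e].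
Proof.
move=> /congE [q eq_f]; apply/congE; exists (q ** r).
by rewrite -smulBl eq_f smulA smul_xn_e_comm smulA.
Qed.

Lemma congM f f' g g' :
  f = f' %[smod e] -> g = g' %[smod e] -> f ** g = f' ** g' %[smod e].
Proof. by move=> /(congMr g) eq_f /(congMl f') eq_g; exact: cong_trans eq_f eq_g. Qed.

Lemma coef_poly_of_vec c k : (poly_of_vec c)`_k = \sum_(i < n) c 0 i * (k == i)%:R.
Proof. by rewrite coef_sum; apply: eq_bigr => i _; rewrite coefZ coefXn. Qed.

Lemma coef_poly_of_vec_ord c (i : 'I_n) : (poly_of_vec c)`_i = c 0 i.
Proof.
rewrite coef_poly_of_vec (bigD1 i) //= eqxx mulr1 big1 ?addr0 // => j ne_ji.
by rewrite eq_sym (inj_eq val_inj) (negPf ne_ji) mulr0.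
Qed.

Lemma size_poly_of_vec c : (size (poly_of_vec c) <= n)%N.
Proof.
apply/leq_sizeP => k le_nk; rewrite coef_poly_of_vec big1 // => i _.
by rewrite gtn_eqF ?mulr0 // (leq_trans (ltn_ord i)).
Qed.

Lemma poly_of_vec_inj : injective (@poly_of_vec F n).
Proof.
move=> c d eq_cd; apply/rowP => i.
by rewrite -!coef_poly_of_vec_ord eq_cd.
Qed.

Lemma poly_of_vec_row r : (size r <= n)%N -> poly_of_vec (\row_(i < n) r`_i) = r.
Proof.
move=> szr; apply/polyP => k; case: (ltnP k n) => [lt_kn|le_nk].
  by rewrite (coef_poly_of_vec_ord _ (Ordinal lt_kn)) mxE.
by rewrite !nth_default // (leq_trans _ le_nk) ?size_poly_of_vec.
Qed.

Lemma size_modp_xn_e f : (size (f %% xn)%R <= n)%N.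
Proof. by rewrite -ltnS -size_xn_e ltn_modp xn_e_neq0. Qed.

Lemma vv_row f : vv f = \row_(i < n) (f %% xn)`_i.
Proof.
have cong_mod : f = poly_of_vec (\row_(i < n) (f %% xn)`_i) %[smod e].
  by rewrite poly_of_vec_row ?size_modp_xn_e //; apply/congP; rewrite modp_id.
rewrite /Defs.vv; case: pickP => [c /asboolP /congP|/(_ (\row_i (f %% xn)`_i))]; last first.
  by move/asboolPn.
rewrite (modp_small (p := poly_of_vec c)) => [->|]; last first.
  by rewrite size_xn_e ltnS size_poly_of_vec.
by apply/rowP => i; rewrite mxE coef_poly_of_vec_ord.
Qed.

Lemma poly_of_vv f : poly_of_vec (vv f) = f %% xn.
Proof. by rewrite vv_row poly_of_vec_row ?size_modp_xn_e. Qed.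

Lemma vvP f : f = poly_of_vec (vv f) %[smod e].
Proof. by apply/congP; rewrite poly_of_vv modp_id. Qed.

Lemma vv_cong f f' : f = f' %[smod e] -> vv f = vv f'.
Proof. by move=> /congP eq_f; rewrite !vv_row eq_f. Qed.

Lemma vv_eq f c : f = poly_of_vec c %[smod e] -> vv f = c.
Proof.
move=> /congP eq_f; apply: poly_of_vec_inj; rewrite poly_of_vv eq_f modp_small //.
by rewrite size_xn_e ltnS size_poly_of_vec.
Qed.

Lemma vv_small r : (size r <= n)%N -> vv r = \row_(i < n) r`_i.
Proof. by move=> szr; apply: vv_eq; rewrite poly_of_vec_row //; exact: cong_refl. Qed.

Lemma vv0 : vv 0 = 0.
Proof. by rewrite vv_row mod0p; apply/rowP => i; rewrite !mxE coef0. Qed.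

Lemma vv_eq0 f : vv f = 0 <-> f = 0 %[smod e].
Proof.
split=> [vv_f0|/vv_cong ->]; last exact: vv0.
by apply/congP; rewrite -poly_of_vv vv_f0 mod0p /poly_of_vec big1 // => i _; rewrite mxE scale0r.
Qed.

Lemma vvD f f' : vv (f + f') = vv f + vv f'.
Proof. by rewrite !vv_row; apply/rowP => i; rewrite !mxE modpD coefD. Qed.

Lemma vvZ (k : F) f : vv (k *: f) = k *: vv f.
Proof. by rewrite !vv_row; apply/rowP => i; rewrite !mxE modpZl coefZ. Qed.

Lemma vv_sum (I : Type) (s : seq I) (P : pred I) (G : I -> {poly F}) :
  vv (\sum_(i <- s | P i) G i) = \sum_(i <- s | P i) vv (G i).
Proof. by elim/big_rec2: _ => [|i x y _ <-]; rewrite ?vv0 ?vvD. Qed.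

End Congruence.

Section CentralQuotient.
Variables (F : finFieldType) (theta : {rmorphism F -> F}) (n : nat) (a : F).
Hypotheses (n_gt0 : (0 < n)%N) (theta_n : forall x : F, iter n theta x = x).
Hypotheses (fix_a : theta a = a).
Implicit Types (f g h r u w : {poly F}).

Local Notation "f ** g" := (skmul theta f g) (at level 40, left associativity).
Local Notation xn := (xn_e n a).
Local Notation vv := (vv theta n a).
Local Notation M := (Mth theta n a).
Local Notation "f = g %[smod a ]" := (cong theta n a f g)
  (at level 70, g at next level, format "f  =  g  %[smod  a ]").

Lemma MthE f : M f = \matrix_(i < n, j < n) vv ('X^i ** f) 0 j.
Proof. by rewrite /Mth smulE. Qed.

Lemma Mth_cong f f' : f = f' %[smod a] -> M f = M f'.
Proof.
move=> eq_f; rewrite !MthE; apply/matrixP => i j.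
by rewrite !mxE (vv_cong n_gt0 fix_a (congMl _ eq_f)).
Qed.

Lemma MthD f f' : M (f + f') = M f + M f'.
Proof. by rewrite !MthE; apply/matrixP => i j; rewrite !mxE smulDr vvD // mxE. Qed.

Lemma Mth0 : M 0 = 0.
Proof. by rewrite MthE; apply/matrixP => i j; rewrite !mxE smul0r vv0 // mxE. Qed.

(* Row i of [M f] gives [x^i f = sum_l (M f)_il x^l] modulo [x^n - a]; multiply by [f']. *)
Lemma MthM f f' : M (f ** f') = M f *m M f'.
Proof.
rewrite !MthE; apply/matrixP => i j; rewrite !mxE -smulA.
rewrite (vv_cong n_gt0 fix_a (congMr fix_a theta_n f' (vvP n_gt0 fix_a _))).
rewrite /poly_of_vec smul_suml vv_sum // summxE; apply: eq_bigr => l _.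
by rewrite smulZl vvZ // !mxE.
Qed.

Lemma Mth1 : M 1 = 1%:M.
Proof.
rewrite MthE; apply/matrixP => i j; rewrite !mxE smul1r vv_small ?size_polyXn //.
by rewrite mxE coefXn (inj_eq val_inj) eq_sym.
Qed.

Lemma Mth_inj f f' : M f = M f' -> f = f' %[smod a].
Proof.
move=> eq_M; have eq_vv : vv f = vv f'.
  apply/rowP => j; have := congr1 (fun A : 'M_n => A (Ordinal n_gt0) j) eq_M.
  by rewrite !MthE !mxE /= expr0 !smul1l.
by apply/(congP n fix_a); rewrite -!(poly_of_vv n_gt0 fix_a) eq_vv.
Qed.

Lemma xn_e_neq0_factors g h : xn = h ** g -> h != 0 /\ g != 0.
Proof.
move=> xn_hg; have := xn_e_neq0 a n_gt0; rewrite xn_hg smulf_eq0 negb_or.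
by case/andP.
Qed.

Lemma xn_e_factors_comm g h : xn = h ** g -> xn = g ** h.
Proof.
move=> xn_hg; have [_ nz_g] := xn_e_neq0_factors xn_hg.
by apply: (smulIf (theta := theta) nz_g); rewrite /= smulA -xn_hg smul_xn_e_comm.
Qed.

Section RightMultiplication.
Variables u w : {poly F}.
Hypothesis xn_wu : w ** u = xn.

Lemma ker_smulr f : f ** u = 0 %[smod a] <-> exists r, f = r ** w %[smod a].
Proof.
have [nz_w nz_u] := xn_e_neq0_factors (esym xn_wu).
split=> [/(congE _ _ _) [q]|[r /(congE _ _ _) [q eq_f]]].
  rewrite subr0 -xn_wu -smulA => /(smulIf (theta := theta) nz_u) ->.
  by exists q; exact: cong_refl.
apply/congE; exists (r + q ** u).
by rewrite subr0 -(subrK (r ** w) f) eq_f !smulDl !smulA xn_wu smul_xn_e_comm // addrC.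
Qed.

Lemma ann_smulr f : (exists r, f = r ** w %[smod a]) <->
  (forall X, (exists t, X = u ** t %[smod a]) -> f ** X = 0 %[smod a]).
Proof.
split=> [/ker_smulr f_u0 X [t eq_X]|ann_f]; last first.
  by apply/ker_smulr; rewrite -[u](smul1r theta); apply: ann_f; exists 1; exact: cong_refl.
apply: cong_trans (congMl f eq_X) _; rewrite -smulA -(smul0l theta t).
exact: congMr.
Qed.

Lemma right_mul_by_factor :
  [/\ forall f f', f = f' %[smod a] -> f ** u = f' ** u %[smod a],
      forall f f', (f + f') ** u = f ** u + f' ** u %[smod a],
      forall r f, r ** f ** u = r ** (f ** u) %[smod a]
    & forall f,
        (f ** u = 0 %[smod a] <-> exists r, f = r ** w %[smod a])
        /\ ((exists r, f = r ** w %[smod a]) <->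
            (forall X, (exists t, X = u ** t %[smod a]) -> f ** X = 0 %[smod a]))].
Proof.
split=> [f f'|f f'|r f|f]; [exact: congMr | | |exact: conj (ker_smulr f) (ann_smulr f)].
  by rewrite smulDl; exact: cong_refl.
by rewrite smulA; exact: cong_refl.
Qed.

End RightMultiplication.

Section LeftMultiplication.
Variables u w : {poly F}.
Hypothesis xn_uw : u ** w = xn.

Lemma ker_smull f : u ** f = 0 %[smod a] <-> exists t, f = w ** t %[smod a].
Proof.
have [nz_u nz_w] := xn_e_neq0_factors (esym xn_uw).
split=> [/(congE _ _ _) [q]|[t /(congE _ _ _) [q eq_f]]].
  rewrite subr0 -smul_xn_e_comm // -xn_uw smulA => /(smulfI (theta := theta) nz_u) ->.
  by exists q; exact: cong_refl.
apply/congE; exists (t + u ** q).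
rewrite subr0 -(subrK (w ** t) f) eq_f smulDr smulDl -[u ** (w ** t)]smulA xn_uw.
by rewrite smul_xn_e_comm // smulA addrC.
Qed.

Lemma ann_smull f : (exists t, f = w ** t %[smod a]) <->
  (forall X, (exists s, X = s ** u %[smod a]) -> X ** f = 0 %[smod a]).
Proof.
split=> [/ker_smull u_f0 X [s eq_X]|ann_f]; last first.
  by apply/ker_smull; rewrite -[u](smul1l theta); apply: ann_f; exists 1; exact: cong_refl.
apply: cong_trans (congMr fix_a theta_n f eq_X) _; rewrite smulA -(smul0r theta s).
exact: congMl.
Qed.

Lemma left_mul_by_factor :
  [/\ forall f f', f = f' %[smod a] -> u ** f = u ** f' %[smod a],
      forall f f', u ** (f + f') = u ** f + u ** f' %[smod a],
      forall f r, u ** (f ** r) = u ** f ** r %[smod a]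
    & forall f,
        (u ** f = 0 %[smod a] <-> exists t, f = w ** t %[smod a])
        /\ ((exists t, f = w ** t %[smod a]) <->
            (forall X, (exists s, X = s ** u %[smod a]) -> X ** f = 0 %[smod a]))].
Proof.
split=> [f f'|f f'|f r|f]; [exact: congMl | | |exact: conj (ker_smull f) (ann_smull f)].
  by rewrite smulDr; exact: cong_refl.
by rewrite smulA; exact: cong_refl.
Qed.

End LeftMultiplication.
End CentralQuotient.

Section ReciprocalSubstitution.
Variables (F : finFieldType) (theta : {rmorphism F -> F}) (n : nat) (b : F).
Hypotheses (n_gt0 : (0 < n)%N) (theta_n : forall x : F, iter n theta x = x).
Hypotheses (nz_b : b != 0) (fix_b : theta b = b).
Implicit Types (f g h r : {poly F}) (c : F).

Local Notation "f ** g" := (skmul theta f g) (at level 40, left associativity).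
Local Notation "f = g %[smod e ]" := (cong theta n e f g)
  (at level 70, g at next level, format "f  =  g  %[smod  e ]").

Lemma fix_bV : theta b^-1 = b^-1.
Proof. by rewrite fmorphV fix_b. Qed.

Lemma iter_fix_bX i k : iter i theta (b ^+ k) = b ^+ k.
Proof. by apply: iter_fixed; rewrite rmorphXn fix_b. Qed.

Lemma iter_theta_mul k c : iter (k * n) theta c = c.
Proof. by rewrite iterM; elim: k => //= k ->. Qed.

(* Powers of [b x^(n-1)], which inverts [x] modulo [x^n - b^-1]. *)
Definition xinv_pow k : {poly F} := b ^+ k *: 'X^(n.-1 * k).

Lemma xinv_powD i j : xinv_pow (i + j) = xinv_pow i ** xinv_pow j.
Proof. by rewrite smul_monomial iter_fix_bX -exprD -mulnDr. Qed.

Lemma xinv_pow_polyC k c : xinv_pow k ** (iter k theta c)%:P = c%:P ** xinv_pow k.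
Proof.
rewrite polyC_monomial smul_monomial -iterD addn0 smulCl scalerA mulrC.
by rewrite -[(n.-1 * k + k)%N]mulSnr prednK // mulnC iter_theta_mul.
Qed.

Lemma cong_xinv_pow_Xsub j : (j <= n)%N -> xinv_pow j = b *: 'X^(n - j) %[smod b^-1].
Proof.
case: j => [_|j le_jn].
  have := cong_XnD n fix_bV 0; rewrite addn0 => cong_Xn.
  rewrite /xinv_pow expr0 muln0 scale1r subn0.
  apply: cong_sym; apply: cong_trans (congZ b cong_Xn) _.
  by rewrite scalerA mulfV // scale1r; exact: cong_refl.
rewrite /xinv_pow (_ : (n.-1 * j.+1 = j * n + (n - j.+1))%N); last by nia.
apply: cong_trans (congZ _ (cong_Xn_mulD n fix_bV _ _)) _.
by rewrite scalerA exprVn exprS -mulrA mulfV ?mulr1 ?expf_neq0 //; exact: cong_refl.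
Qed.

Lemma cong_xinv_pow_n : xinv_pow n = b%:P %[smod b^-1].
Proof. by rewrite polyC_monomial -(subnn n); exact: cong_xinv_pow_Xsub. Qed.

Lemma cong_scaled_Xmuln j : b ^+ j *: 'X^(j * n) = 1 %[smod b^-1].
Proof.
rewrite -[(j * n)%N]addn0; apply: cong_trans (congZ _ (cong_Xn_mulD n fix_bV _ _)) _.
by rewrite scalerA exprVn mulfV ?expf_neq0 // scale1r expr0; exact: cong_refl.
Qed.

Lemma cong_xinv_pow_Xn j : xinv_pow j ** 'X^j = 1 %[smod b^-1].
Proof.
rewrite smulZl smulXn -[(n.-1 * j + j)%N]mulSnr prednK // mulnC.
exact: cong_scaled_Xmuln.
Qed.

Lemma cong_Xn_xinv_pow j : 'X^j ** xinv_pow j = 1 %[smod b^-1].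
Proof.
rewrite -[X in X ** _]scale1r smul_monomial mul1r iter_fix_bX addnC.
by rewrite -[(n.-1 * j + j)%N]mulSnr prednK // mulnC; exact: cong_scaled_Xmuln.
Qed.

(* The anti-homomorphism [sum_i f_i x^i |-> sum_i x^-i f_i] from [S_b] to [S_(b^-1)]. *)
Definition subst_xinv f := \sum_(i < size f) xinv_pow i ** (f`_i)%:P.

Lemma subst_xinv_widen N f : (size f <= N)%N ->
  subst_xinv f = \sum_(i < N) xinv_pow i ** (f`_i)%:P.
Proof.
move=> szf; rewrite /subst_xinv (big_ord_widen_zero (G := fun i => xinv_pow i ** (f`_i)%:P) szf) //.
by move=> i le_f_i; rewrite nth_default // smul0r.
Qed.

Lemma subst_xinvD f f' : subst_xinv (f + f') = subst_xinv f + subst_xinv f'.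
Proof.
rewrite !(subst_xinv_widen (N := maxn (size f) (size f'))) ?leq_maxl ?leq_maxr ?size_polyD //.
by rewrite -big_split; apply: eq_bigr => i _; rewrite coefD polyCD smulDr.
Qed.

Lemma subst_xinv0 : subst_xinv 0 = 0.
Proof. by rewrite /subst_xinv size_poly0 big_ord0. Qed.

Lemma subst_xinvN f : subst_xinv (- f) = - subst_xinv f.
Proof. by apply: (addIr (subst_xinv f)); rewrite -subst_xinvD !addNr subst_xinv0. Qed.

Lemma subst_xinv_sum (I : Type) (s : seq I) (P : pred I) (G : I -> {poly F}) :
  subst_xinv (\sum_(i <- s | P i) G i) = \sum_(i <- s | P i) subst_xinv (G i).
Proof. by elim/big_rec2: _ => [|i x y _ <-]; rewrite ?subst_xinv0 ?subst_xinvD. Qed.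

Lemma subst_xinv_monomial c i : subst_xinv (c *: 'X^i) = xinv_pow i ** c%:P.
Proof.
rewrite (subst_xinv_widen (N := i.+1)) ?(leq_trans (size_scale_leq _ _)) ?size_polyXn //.
rewrite big_ord_recr /= big1 ?add0r => [|k _]; last first.
  by rewrite coefZ coefXn ltn_eqF // mulr0 smul0r.
by rewrite coefZ coefXn eqxx mulr1.
Qed.

Lemma subst_xinvM f g : subst_xinv (f ** g) = subst_xinv g ** subst_xinv f.
Proof.
rewrite (monomial_expansion f) (monomial_expansion g) smul_suml !subst_xinv_sum.
rewrite smul_sumr; apply: eq_bigr => i _; rewrite smul_sumr subst_xinv_sum smul_suml.
apply: eq_bigr => j _; rewrite smul_monomial !subst_xinv_monomial addnC xinv_powD !smulA.
congr (_ ** _); rewrite -smulA -xinv_pow_polyC smulA smulCl -mul_polyC -polyCM.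
by rewrite mulrC.
Qed.

Lemma subst_xinv_xn_e : subst_xinv (xn_e n b) = xinv_pow n - b%:P.
Proof.
rewrite /xn_e subst_xinvD subst_xinvN -(scale1r ('X^n : {poly F})) (polyC_monomial b).
rewrite !subst_xinv_monomial polyC1 smul1r /xinv_pow expr0 muln0 scale1r smul1l.
by rewrite -polyC_monomial.
Qed.

Lemma subst_xinv_cong f f' : f = f' %[smod b] -> subst_xinv f = subst_xinv f' %[smod b^-1].
Proof.
move=> /congE [q eq_f]; have /congE [q' eq_xn] := cong_xinv_pow_n.
apply/congE; exists (q' ** subst_xinv q).
rewrite -subst_xinvN -subst_xinvD eq_f subst_xinvM subst_xinv_xn_e eq_xn !smulA.
by rewrite (smul_xn_e_comm fix_bV theta_n).
Qed.

Lemma cong_xinv_pow_monomial i j c :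
  xinv_pow (i + j) ** (iter j theta c *: 'X^j) = xinv_pow i ** c%:P %[smod b^-1].
Proof.
rewrite -(smulCl theta) xinv_powD !smulA -(smulA theta (xinv_pow j)) xinv_pow_polyC.
rewrite smulA -[c%:P in X in cong _ _ _ _ X](smul1r theta); do 2!apply: congMl.
exact: cong_xinv_pow_Xn.
Qed.

Lemma cong_monomial_xinv_pow i j c :
  (c *: 'X^j) ** xinv_pow (j + i) = xinv_pow i ** (iter i theta c)%:P %[smod b^-1].
Proof.
rewrite xinv_pow_polyC xinv_powD -smulA smulZl -(smulCl theta).
rewrite -[c%:P in X in cong _ _ _ _ X](smul1r theta).
apply: (congMr fix_bV theta_n); apply: congMl; exact: cong_Xn_xinv_pow.
Qed.

Lemma cong_subst_xinv_rho h :
  subst_xinv h = xinv_pow (size h).-1 ** rho_l theta h %[smod b^-1].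
Proof.
rewrite /subst_xinv (reindex_inj rev_ord_inj) /rho_l poly_def smul_sumr.
apply: cong_sum => i _; apply: cong_sym; have lt_ih := ltn_ord i.
rewrite /=; have -> : (size h - i.+1 = (size h).-1 - i)%N by lia.
have -> : xinv_pow (size h).-1 = xinv_pow ((size h).-1 - i + i) by rewrite subnK //; lia.
exact: cong_xinv_pow_monomial.
Qed.

Lemma cong_subst_xinv_rho_l h :
  subst_xinv (rho_l theta h) = h ** xinv_pow (size h).-1 %[smod b^-1].
Proof.
have -> : h ** xinv_pow (size h).-1 =
    \sum_(i < size h) (h`_i *: 'X^i) ** xinv_pow (size h).-1.
  by rewrite -smul_suml -monomial_expansion.
rewrite (subst_xinv_widen (N := size h)) /rho_l ?size_poly //.
rewrite [in X in cong _ _ _ _ X](reindex_inj rev_ord_inj).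
apply: cong_sum => i _; apply: cong_sym; have lt_ih := ltn_ord i.
rewrite /= coef_poly lt_ih; have -> : (size h - i.+1 = (size h).-1 - i)%N by lia.
have -> : xinv_pow (size h).-1 = xinv_pow ((size h).-1 - i + i) by rewrite subnK //; lia.
exact: cong_monomial_xinv_pow.
Qed.

(* Chosen so that [dotv y c] is the constant term of [poly_of_vec c ** dual_poly a y]
   in [S_a]; see [dotv_dual_poly]. *)
Definition dual_poly (c : F) (y : 'rV[F]_n) : {poly F} :=
  \sum_(j < n) (iter (n - j) theta (y 0 j) / c) *: 'X^(n - j).

Lemma cong_subst_xinv_dual_poly y :
  subst_xinv (dual_poly b y) = poly_of_vec y %[smod b^-1].
Proof.
rewrite /dual_poly subst_xinv_sum; apply: cong_sum => j _.
have le_jn := ltnW (ltn_ord j).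
have -> : iter (n - j) theta (y 0 j) / b = iter (n - j) theta (y 0 j / b).
  by rewrite iter_rmorphM iter_fmorphV (iter_fixed _ fix_b).
rewrite subst_xinv_monomial xinv_pow_polyC.
apply: cong_trans (congMl _ (cong_xinv_pow_Xsub (leq_subr j n))) _.
by rewrite subKn // smulCl scalerA divfK //; exact: cong_refl.
Qed.

Lemma cong_dual_poly_subst_xinv y :
  dual_poly b^-1 y = subst_xinv (poly_of_vec y) %[smod b^-1].
Proof.
rewrite /dual_poly (subst_xinv_widen (N := n)) ?size_poly_of_vec //.
apply: cong_sum => j _; rewrite coef_poly_of_vec_ord; apply: cong_sym.
apply: cong_trans (congMr fix_bV theta_n _ (cong_xinv_pow_Xsub (ltnW (ltn_ord j)))) _.
rewrite smulZl polyC_monomial -[X in X ** _]scale1r smul_monomial addn0 mul1r.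
by rewrite scalerA invrK mulrC; exact: cong_refl.
Qed.

End ReciprocalSubstitution.

Section DualCode.
Variables (F : finFieldType) (theta : {rmorphism F -> F}) (n : nat) (a : F).
Hypotheses (n_gt0 : (0 < n)%N) (theta_n : forall x : F, iter n theta x = x).
Hypotheses (nz_a : a != 0) (fix_a : theta a = a).
Implicit Types (f r : {poly F}) (y c : 'rV[F]_n).

Local Notation "f ** g" := (skmul theta f g) (at level 40, left associativity).
Local Notation xn := (xn_e n a).
Local Notation vv := (vv theta n a).
Local Notation "f = g %[smod e ]" := (cong theta n e f g)
  (at level 70, g at next level, format "f  =  g  %[smod  e ]").

Definition const_term f := (f %% xn)`_0.

Lemma const_term_cong f f' : f = f' %[smod a] -> const_term f = const_term f'.
Proof. by move=> /(congP _ fix_a) eq_f; rewrite /const_term eq_f. Qed.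

Lemma const_term0 : const_term 0 = 0.
Proof. by rewrite /const_term mod0p coef0. Qed.

Lemma const_termZ (k : F) f : const_term (k *: f) = k * const_term f.
Proof. by rewrite /const_term modpZl coefZ. Qed.

Lemma const_term_sum (I : Type) (s : seq I) (P : pred I) (G : I -> {poly F}) :
  const_term (\sum_(i <- s | P i) G i) = \sum_(i <- s | P i) const_term (G i).
Proof.
elim/big_rec2: _ => [|i x y _ <-]; first exact: const_term0.
by rewrite /const_term modpD coefD.
Qed.

Lemma const_term_Xn_small m : (0 < m < n)%N -> const_term 'X^m = 0.
Proof.
case/andP=> m_gt0 lt_mn; rewrite /const_term modp_small ?coefXn ?ltn_eqF //.
by rewrite size_polyXn size_xn_e // ltnS ltnW.
Qed.

Lemma const_term_Xn (i j : 'I_n) :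
  const_term 'X^(i + (n - j)) = if i == j then a else 0.
Proof.
have lt_in := ltn_ord i; have lt_jn := ltn_ord j.
case: (ltngtP i j) => [lt_ij|lt_ji|/val_inj ->].
- have ne_ij : i != j by rewrite -val_eqE neq_ltn lt_ij.
  by rewrite (negPf ne_ij) const_term_Xn_small //; lia.
- have ne_ij : i != j by rewrite -val_eqE neq_ltn lt_ji orbT.
  rewrite (negPf ne_ij) (_ : i + (n - j) = n + (i - j))%N; last by lia.
  rewrite (const_term_cong (cong_XnD n fix_a _)) const_termZ.
  by rewrite const_term_Xn_small ?mulr0 //; lia.
- rewrite eqxx (_ : j + (n - j) = n + 0)%N; last by lia.
  rewrite (const_term_cong (cong_XnD n fix_a _)) const_termZ /const_term.
  by rewrite modp_small ?coefXn ?mulr1 // size_polyXn size_xn_e.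
Qed.

Lemma dotv_dual_poly y c : dotv y c = const_term (poly_of_vec c ** dual_poly theta a y).
Proof.
rewrite /poly_of_vec /dual_poly smul_suml const_term_sum /dotv; apply: eq_bigr => i _.
rewrite smul_sumr const_term_sum (bigD1 i) //= big1 ?addr0 => [|j ne_ji]; last first.
  by rewrite smul_monomial const_termZ const_term_Xn eq_sym (negPf ne_ji) mulr0.
rewrite smul_monomial const_termZ const_term_Xn eqxx iter_rmorphM iter_fmorphV.
rewrite (iter_fixed _ fix_a) -iterD subnKC ?theta_n ?(ltnW (ltn_ord i)) //.
by rewrite -mulrA divfK // mulrC.
Qed.

Lemma const_term_Xsub_smul f (j : 'I_n) :
  const_term ('X^(n - j) ** f) = iter (n - j) theta (vv f 0 j) * a.
Proof.
rewrite (const_term_cong (congMl _ (vvP n_gt0 fix_a f))) /poly_of_vec.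
rewrite -(scale1r ('X^(n - j) : {poly F})) smul_sumr const_term_sum (bigD1 j) //= big1 ?addr0.
  by rewrite smul_monomial addnC const_termZ const_term_Xn eqxx mul1r.
by move=> l ne_lj; rewrite smul_monomial addnC const_termZ const_term_Xn (negPf ne_lj) mulr0.
Qed.

Variables g h : {poly F}.
Hypothesis xn_hg : xn = h ** g.

Lemma orthogonal_code_dual_poly y :
  (forall c, (exists r, c = vv (r ** g)) -> dotv y c = 0) ->
  g ** dual_poly theta a y = 0 %[smod a].
Proof.
move=> orth_y; apply/(vv_eq0 n_gt0 fix_a); apply/rowP => j; rewrite mxE.
have /eqP := orth_y _ (ex_intro _ ('X^(n - j)) erefl).
rewrite dotv_dual_poly.
rewrite (const_term_cong (congMr fix_a theta_n _ (cong_sym (vvP n_gt0 fix_a _)))).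
by rewrite smulA const_term_Xsub_smul mulf_eq0 (negPf nz_a) orbF iter_fmorph_eq0 => /eqP.
Qed.

Lemma dual_code_rho_l y :
  (forall c, (exists r, c = vv (r ** g)) -> dotv y c = 0) <->
  (exists r, y = Defs.vv theta n a^-1 (r ** rho_l theta h)).
Proof.
have xn_gh := xn_e_factors_comm n_gt0 theta_n fix_a xn_hg.
have fix_aV := fix_bV fix_a; have nz_aV : a^-1 != 0 by rewrite invr_eq0.
split=> [orth_y|[r ->] c [s ->]].
  have /(ker_smull n_gt0 theta_n fix_a (esym xn_gh)) [t cong_dual] :=
    orthogonal_code_dual_poly orth_y.
  exists (subst_xinv theta n a t ** xinv_pow n a (size h).-1).
  apply/esym/(vv_eq n_gt0 fix_aV); apply: cong_sym.
  apply: cong_trans (cong_sym (cong_subst_xinv_dual_poly n_gt0 theta_n nz_a fix_a y)) _.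
  apply: cong_trans (subst_xinv_cong n_gt0 theta_n nz_a fix_a cong_dual) _.
  rewrite subst_xinvM // smulA; apply: congMl.
  exact: cong_subst_xinv_rho.
set y0 := Defs.vv theta n a^-1 (r ** rho_l theta h).
have cong_dual : dual_poly theta a y0 =
    h ** xinv_pow n a^-1 (size h).-1 ** subst_xinv theta n a^-1 r %[smod a].
  have := cong_dual_poly_subst_xinv n_gt0 theta_n nz_aV fix_aV y0.
  rewrite invrK => /cong_trans; apply.
  have := subst_xinv_cong n_gt0 theta_n nz_aV fix_aV
    (cong_sym (vvP n_gt0 fix_aV (r ** rho_l theta h))).
  rewrite invrK => /cong_trans; apply.
  rewrite subst_xinvM //; apply: (congMr fix_a theta_n).
  by have := cong_subst_xinv_rho_l n_gt0 theta_n nz_aV fix_aV h; rewrite invrK.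
rewrite dotv_dual_poly -const_term0; apply: const_term_cong.
apply: cong_trans (congM fix_a theta_n (cong_sym (vvP n_gt0 fix_a _)) cong_dual) _.
rewrite !smulA -(smulA theta g) -xn_gh -(smul0r theta s); apply: congMl.
rewrite -(smul0l theta (xinv_pow n a^-1 (size h).-1 ** subst_xinv theta n a^-1 r)).
exact/(congMr fix_a theta_n)/cong_xn_e0.
Qed.

End DualCode.

Theorem theorem6p6 (F : finFieldType) (theta : {rmorphism F -> F})
  (n : nat) (a : F) (g h : {poly F}) :
  bijective theta ->
  (0 < n)%N ->
  (forall c : F, iter n theta c = c) ->
  a != 0 -> theta a = a ->
  xn_e n a = smul theta h g ->
  [/\ (forall f f', cong theta n a f f' -> Mth theta n a f = Mth theta n a f'),
      (forall f f', Mth theta n a (f + f') = Mth theta n a f + Mth theta n a f'),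
      (forall f f', Mth theta n a (smul theta f f')
                    = Mth theta n a f *m Mth theta n a f'),
      Mth theta n a 1 = 1%:M
    & (forall f f', Mth theta n a f = Mth theta n a f' -> cong theta n a f f')]
  /\
  xn_e n a = smul theta g h
  /\
  (Mth theta n a g *m Mth theta n a h = 0 /\ Mth theta n a h *m Mth theta n a g = 0)
  /\
  (forall u w : {poly F}, let psi := fun f => smul theta f u in
     (u = h /\ w = g) \/ (u = g /\ w = h) ->
     [/\ forall f f', cong theta n a f f' -> cong theta n a (psi f) (psi f'),
         forall f f', cong theta n a (psi (f + f')) (psi f + psi f'),
         forall r f, cong theta n a (psi (smul theta r f)) (smul theta r (psi f))
       & forall f,
           (cong theta n a (psi f) 0 <-> exists r, cong theta n a f (smul theta r w))
           /\ ((exists r, cong theta n a f (smul theta r w)) <->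
               (forall X, (exists t, cong theta n a X (smul theta u t)) ->
                          cong theta n a (smul theta f X) 0))])
  /\
  (forall u w : {poly F}, let psi := fun f => smul theta u f in
     (u = h /\ w = g) \/ (u = g /\ w = h) ->
     [/\ forall f f', cong theta n a f f' -> cong theta n a (psi f) (psi f'),
         forall f f', cong theta n a (psi (f + f')) (psi f + psi f'),
         forall f r, cong theta n a (psi (smul theta f r)) (smul theta (psi f) r)
       & forall f,
           (cong theta n a (psi f) 0 <-> exists t, cong theta n a f (smul theta w t))
           /\ ((exists t, cong theta n a f (smul theta w t)) <->
               (forall X, (exists s, cong theta n a X (smul theta s u)) ->
                          cong theta n a (smul theta X f) 0))])
  /\
  (forall y : 'rV[F]_n,
     (forall c : 'rV[F]_n, (exists r, c = vv theta n a (smul theta r g)) ->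
        dotv y c = 0)
     <-> (exists r, y = vv theta n a^-1 (smul theta r (rho_l theta h)))).
Proof.
move=> _ n_gt0 theta_n nz_a fix_a; rewrite !smulE => xn_hg.
have xn_gh := xn_e_factors_comm n_gt0 theta_n fix_a xn_hg.
split; first split.
- exact: (Mth_cong n_gt0 fix_a).
- exact: (MthD n_gt0 fix_a).
- exact: (MthM n_gt0 theta_n fix_a).
- exact: (Mth1 n_gt0 fix_a).
- exact: (Mth_inj n_gt0 fix_a).
split; first exact: xn_gh.
split.
  rewrite -!(MthM n_gt0 theta_n fix_a) -xn_gh -xn_hg.
  by rewrite (Mth_cong n_gt0 fix_a (cong_xn_e0 theta n a)) (Mth0 n_gt0 fix_a).
split.
  move=> u w /= [[-> ->]|[-> ->]]; apply: right_mul_by_factor => //; exact/esym.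
split.
  move=> u w /= [[-> ->]|[-> ->]]; apply: left_mul_by_factor => //; exact/esym.
exact: dual_code_rho_l.
Qed.
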